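(* Consider problem (P) and suppose Assumptions A and B hold. Let $\{(x^t,L_g^t)\}$ be generated by SCP$_{ls}$ and let $\Omega$ be the set of accumulation points of $\{(x^{t+1},x^t,L_g^t)\}$. Then $\Omega\neq\emptyset$ and $\bar F\equiv\bar F^*$ on $\Omega$, where $\bar F^*:=\lim_{t\to\infty}\bar F(x^{t+1},x^t,L_g^t)$ (this limit exists and is finite).
   Context: Problem (P): $\min_{x\in\mathbb R^n}F(x):=f(x)+P_1(x)-P_2(x)+\delta_{\{g\le 0\}}(x)$, where $f:\mathbb R^n\to\mathbb R$ is continuously differentiable, $P_1,P_2:\mathbb R^n\to\mathbb R$ are convex and continuous, $g=(g_1,\dots,g_m):\mathbb R^n\to\mathbb R^m$ is continuous with $\{x:g(x)\le0\}\neq\emptyset$ (componentwise inequalities), $\delta_C$ the indicator function of $C$. Assumption A: (i) $\nabla f$ is Lipschitz with modulus $L_f$; (ii) each $g_i$ is differentiable with $\nabla g_i$ Lipschitz with modulus $L_{g_i}$; (iii) $F$ is level-bounded. Assumption B (MFCQ): each $g_i$ is continuously differentiable and for every $x$ with $g(x)\le0$ there is $d$ with $\langle\nabla g_i(x),d\rangle<0$ for all $i\in I(x):=\{j:g_j(x)=0\}$. $\bar G(x,y,w)\in\mathbb R^m$ ($x,y\in\mathbb R^n,w\in\mathbb R^m$) has components $\bar G_i(x,y,w)=g_i(y)+\langle\nabla g_i(y),x-y\rangle+\frac{w_i}{2}\|x-y\|^2$, and $\bar F(x,y,w):=f(x)+P_1(x)-P_2(x)+\delta_{\{\bar G\le0\}}(x,y,w)$.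 Algorithm SCP$_{ls}$: fix $c>0$, $0<\underline L<\bar L$, $\tau>1$ and $x^0$ with $g(x^0)\le0$. For $t=0,1,2,\dots$: (1) pick any $\xi^t\in\partial P_2(x^t)$; (2) choose $L_f^{t,0}\in[\underline L,\bar L]$, $L_g^{t,0}\in[\underline L,\bar L]^m$ arbitrarily, set $\tilde L_f=L_f^{t,0}$, $\tilde L_g=L_g^{t,0}$; (3) compute $\tilde x$ solving: minimize $\langle\nabla f(x^t)-\xi^t,x-x^t\rangle+\frac{\tilde L_f}{2}\|x-x^t\|^2+P_1(x)$ subject to $\bar G(x,x^t,\tilde L_g)\le0$. If $g(\tilde x)\le0$ and $F(\tilde x)\le F(x^t)-\frac c2\|\tilde x-x^t\|^2$, set $x^{t+1}=\tilde x$, $L_f^t=\tilde L_f$, $L_g^t=\tilde L_g$ and go to iteration $t+1$; otherwise, if $g(\tilde x)\not\le0$ replace $\tilde L_g$ by $\tau\tilde L_g$, while if $g(\tilde x)\le0$ but the decrease inequality fails replace $\tilde L_f$ by $\tau\tilde L_f$, and repeat step (3). *)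

From Stdlib Require Import Reals Lra ClassicalEpsilon.
From Stdlib Require Fin.
Open Scope R_scope.

Definition Vec (n : nat) := Fin.t n -> R.

Fixpoint sumF (n : nat) : (Fin.t n -> R) -> R :=
  match n return (Fin.t n -> R) -> R with
  | O => fun _ => 0
  | S k => fun v => v Fin.F1 + sumF k (fun i => v (Fin.FS i))
  end.

Definition inner {n} (x y : Vec n) : R := sumF n (fun i => x i * y i).
Definition vnorm {n} (x : Vec n) : R := sqrt (inner x x).
Definition vadd {n} (x y : Vec n) : Vec n := fun i => x i + y i.
Definition vsub {n} (x y : Vec n) : Vec n := fun i => x i - y i.
Definition vscale {n} (a : R) (x : Vec n) : Vec n := fun i => a * x i.

Definition is_gradient {n} (f : Vec n -> R) (gf : Vec n -> Vec n) : Prop :=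
  forall x eps, 0 < eps -> exists delta, 0 < delta /\
    forall h, vnorm h < delta ->
      Rabs (f (vadd x h) - f x - inner (gf x) h) <= eps * vnorm h.

Definition lipschitz {n k} (G : Vec n -> Vec k) (L : R) : Prop :=
  forall x y, vnorm (vsub (G x) (G y)) <= L * vnorm (vsub x y).

Definition continuous_fun {n} (h : Vec n -> R) : Prop :=
  forall x eps, 0 < eps -> exists delta, 0 < delta /\
    forall y, vnorm (vsub y x) < delta -> Rabs (h y - h x) < eps.

Definition convex_fun {n} (h : Vec n -> R) : Prop :=
  forall x y lam, 0 <= lam <= 1 ->
    h (vadd (vscale lam x) (vscale (1 - lam) y)) <= lam * h x + (1 - lam) * h y.

Definition subgrad {n} (h : Vec n -> R) (x xi : Vec n) : Prop :=
  forall y, h y >= h x + inner xi (vsub y x).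

Definition feasible {n m} (g : Fin.t m -> Vec n -> R) (x : Vec n) : Prop :=
  forall i, g i x <= 0.

(* level-boundedness of F = f + P1 - P2 + indicator{g <= 0} *)
Definition level_bounded {n m} (f P1 P2 : Vec n -> R) (g : Fin.t m -> Vec n -> R) : Prop :=
  forall alpha, exists M, forall x, feasible g x -> f x + P1 x - P2 x <= alpha -> vnorm x <= M.

Definition active {n m} (g : Fin.t m -> Vec n -> R) (x : Vec n) (i : Fin.t m) : Prop :=
  g i x = 0.

Definition MFCQ {n m} (g : Fin.t m -> Vec n -> R) (gg : Fin.t m -> Vec n -> Vec n) : Prop :=
  forall x, feasible g x -> exists d, forall i, active g x i -> inner (gg i x) d < 0.

Definition Gbar {n m} (g : Fin.t m -> Vec n -> R) (gg : Fin.t m -> Vec n -> Vec n)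
  (x y : Vec n) (w : Vec m) (i : Fin.t m) : R :=
  g i y + inner (gg i y) (vsub x y) + w i / 2 * (vnorm (vsub x y)) ^ 2.

(* extended reals for functions with an indicator term *)
Inductive ER := Fin (r : R) | PInf.

Definition Fbar {n m} (f P1 P2 : Vec n -> R) (g : Fin.t m -> Vec n -> R)
  (gg : Fin.t m -> Vec n -> Vec n) (x y : Vec n) (w : Vec m) : ER :=
  match excluded_middle_informative (forall i, Gbar g gg x y w i <= 0) with
  | left _ => Fin (f x + P1 x - P2 x)
  | right _ => PInf
  end.

Definition subproblem_solution {n m} (gf : Vec n -> Vec n) (P1 : Vec n -> R)
  (g : Fin.t m -> Vec n -> R) (gg : Fin.t m -> Vec n -> Vec n)
  (xcur xi : Vec n) (Lf : R) (Lg : Vec m) (xt : Vec n) : Prop :=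
  let obj := fun x => inner (vsub (gf xcur) xi) (vsub x xcur)
                      + Lf / 2 * (vnorm (vsub x xcur)) ^ 2 + P1 x in
  (forall i, Gbar g gg xt xcur Lg i <= 0) /\
  (forall y, (forall i, Gbar g gg y xcur Lg i <= 0) -> obj xt <= obj y).

Definition scp_ls_step {n m} (f : Vec n -> R) (gf : Vec n -> Vec n) (P1 P2 : Vec n -> R)
  (g : Fin.t m -> Vec n -> R) (gg : Fin.t m -> Vec n -> Vec n)
  (c Lund Lbar tau : R) (xcur xnext : Vec n) (Lft : R) (Lgt : Vec m) : Prop :=
  let F0 := fun x => f x + P1 x - P2 x in
  exists xi, subgrad P2 xcur xi /\
  exists (K : nat) (LF : nat -> R) (LG : nat -> Vec m) (XT : nat -> Vec n),
    Lund <= LF O <= Lbar /\ (forall i, Lund <= LG O i <= Lbar) /\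
    (forall j, (j <= K)%nat -> subproblem_solution gf P1 g gg xcur xi (LF j) (LG j) (XT j)) /\
    (forall j, (j < K)%nat ->
       (~ feasible g (XT j) /\ (forall i, LG (S j) i = tau * LG j i) /\ LF (S j) = LF j)
       \/
       (feasible g (XT j) /\
        ~ (F0 (XT j) <= F0 xcur - c / 2 * (vnorm (vsub (XT j) xcur)) ^ 2) /\
        LF (S j) = tau * LF j /\ (forall i, LG (S j) i = LG j i))) /\
    feasible g (XT K) /\
    F0 (XT K) <= F0 xcur - c / 2 * (vnorm (vsub (XT K) xcur)) ^ 2 /\
    xnext = XT K /\ Lft = LF K /\ (forall i, Lgt i = LG K i).

Definition scp_ls_generated {n m} (f : Vec n -> R) (gf : Vec n -> Vec n) (P1 P2 : Vec n -> R)
  (g : Fin.t m -> Vec n -> R) (gg : Fin.t m -> Vec n -> Vec n)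
  (c Lund Lbar tau : R) (x0 : Vec n)
  (x : nat -> Vec n) (Lf : nat -> R) (Lg : nat -> Vec m) : Prop :=
  x O = x0 /\
  forall t, scp_ls_step f gf P1 P2 g gg c Lund Lbar tau (x t) (x (S t)) (Lf t) (Lg t).

Definition is_accum_point {n m} (x : nat -> Vec n) (Lg : nat -> Vec m)
  (a b : Vec n) (w : Vec m) : Prop :=
  forall eps N, 0 < eps -> exists t, (N <= t)%nat /\
    vnorm (vsub (x (S t)) a) < eps /\ vnorm (vsub (x t) b) < eps /\
    vnorm (vsub (Lg t) w) < eps.

From Stdlib Require Import Reals Lra Lia Psatz FunctionalExtensionality Classical ClassicalEpsilon.
From Stdlib Require Fin.
Open Scope R_scope.

(** The line search for [L_g] stops enlarging the weights once [L_g,i / 2]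
    exceeds the Lipschitz modulus of [grad g_i]: by the descent lemma the
    linearized constraint [Gbar <= 0] then already implies [g(x~) <= 0].  So the
    weights stay bounded, every iterate is feasible and [F] decreases along the
    iterates.  Level-boundedness keeps the iterates in a compact set, which gives
    accumulation points; the monotone values [F(x^t)] converge to the value of
    [F] at any of them, and [Gbar <= 0] passes to the limit by continuity, so
    [Fbar] is finite and equal to that limit on the whole set of accumulation
    points. *)

(** * Finite sums and the Euclidean inner product *)

Lemma sumF_nonneg k (u : Fin.t k -> R) : (forall i, 0 <= u i) -> 0 <= sumF k u.
Proof.
  revert u; induction k as [|k IH]; intros u Hu; simpl; [lra|].
  specialize (IH (fun i => u (Fin.FS i)) (fun i => Hu (Fin.FS i))).
  specialize (Hu Fin.F1). lra.
Qed.

Lemma sumF_ge_term k (u : Fin.t k -> R) i : (forall j, 0 <= u j) -> u i <= sumF k u.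
Proof.
  revert u; induction i as [k|k i IH]; intros u Hu; simpl.
  - pose proof (sumF_nonneg k (fun j => u (Fin.FS j)) (fun j => Hu (Fin.FS j))). lra.
  - pose proof (IH (fun j => u (Fin.FS j)) (fun j => Hu (Fin.FS j))).
    specialize (Hu Fin.F1). lra.
Qed.

Lemma Un_cv_const (c : R) : Un_cv (fun _ => c) c.
Proof.
  intros e He; exists O; intros j _. unfold Rdist. rewrite Rminus_diag, Rabs_R0. exact He.
Qed.

Lemma Un_cv_sumF k (F : nat -> Fin.t k -> R) (l : Fin.t k -> R) :
  (forall i, Un_cv (fun j => F j i) (l i)) -> Un_cv (fun j => sumF k (F j)) (sumF k l).
Proof.
  revert F l; induction k as [|k IH]; intros F l HF; simpl.
  - apply Un_cv_const.
  - apply CV_plus; [apply HF|].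
    apply (IH (fun j i => F j (Fin.FS i)) (fun i => l (Fin.FS i))). intro i; apply HF.
Qed.

Lemma inner_ge0 {k} (v : Vec k) : 0 <= inner v v.
Proof. apply sumF_nonneg; intro i; nra. Qed.

Lemma vnorm_ge0 {k} (v : Vec k) : 0 <= vnorm v.
Proof. apply sqrt_pos. Qed.

Lemma Rabs_coord_le_vnorm {k} (v : Vec k) i : Rabs (v i) <= vnorm v.
Proof.
  unfold vnorm. rewrite <- sqrt_Rsqr_abs. apply sqrt_le_1_alt. unfold Rsqr.
  apply (sumF_ge_term k (fun j => v j * v j)). intro j; nra.
Qed.

Lemma inner_scale_r {k} (u v : Vec k) a : inner u (vscale a v) = a * inner u v.
Proof.
  unfold inner, vscale; revert u v; induction k as [|k IH]; intros u v; simpl; [ring|].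
  rewrite (IH (fun i => u (Fin.FS i)) (fun i => v (Fin.FS i))). ring.
Qed.

Lemma inner_sub_l {k} (u u' v : Vec k) : inner (vsub u u') v = inner u v - inner u' v.
Proof.
  unfold inner, vsub; revert u u' v; induction k as [|k IH]; intros u u' v; simpl; [ring|].
  rewrite (IH (fun i => u (Fin.FS i)) (fun i => u' (Fin.FS i)) (fun i => v (Fin.FS i))). ring.
Qed.

Lemma inner_vsub_diag_r {k} (u a : Vec k) : inner u (vsub a a) = 0.
Proof.
  replace (vsub a a) with (vscale 0 a)
    by (apply functional_extensionality; intro i; unfold vsub, vscale; ring).
  rewrite inner_scale_r. ring.
Qed.

Lemma vnorm_scale {k} a (v : Vec k) : vnorm (vscale a v) = Rabs a * vnorm v.
Proof.
  unfold vnorm. rewrite <- sqrt_Rsqr_abs, <- sqrt_mult_alt by apply Rle_0_sqr.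
  f_equal. unfold inner, vscale. induction k as [|k IH]; simpl; [ring|].
  rewrite (IH (fun i => v (Fin.FS i))). unfold Rsqr; ring.
Qed.

Lemma vadd_vsub {k} (a y : Vec k) : vadd a (vsub y a) = y.
Proof. apply functional_extensionality; intro i; unfold vadd, vsub; ring. Qed.

Lemma inner_pow2_le k (u v : Vec k) : (inner u v) ^ 2 <= inner u u * inner v v.
Proof.
  unfold inner; revert u v; induction k as [|k IH]; intros u v; simpl; [lra|].
  specialize (IH (fun i => u (Fin.FS i)) (fun i => v (Fin.FS i))).
  set (a := u Fin.F1) in *. set (b := v Fin.F1) in *.
  set (S := sumF k (fun i => u (Fin.FS i) * v (Fin.FS i))) in *.
  set (U := sumF k (fun i => u (Fin.FS i) * u (Fin.FS i))) in *.
  set (V := sumF k (fun i => v (Fin.FS i) * v (Fin.FS i))) in *.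
  assert (HU : 0 <= U) by (apply sumF_nonneg; intro i; nra).
  assert (HV : 0 <= V) by (apply sumF_nonneg; intro i; nra).
  (* the cross term [2 a b S] is controlled by [a^2 V + b^2 U], via [U (a^2 V + b^2 U - 2 a b S) >= (a S - b U)^2] *)
  assert (Hcross : 2 * a * b * S <= a * a * V + b * b * U).
  { destruct (Req_dec U 0) as [HU0|HU0].
    - rewrite HU0 in *. assert (S = 0) by nra. subst S. nra.
    - assert (0 <= (a * S - b * U) ^ 2) by apply pow2_ge_0.
      assert (0 <= a * a * (U * V - S * S)) by (apply Rmult_le_pos; nra).
      nra. }
  nra.
Qed.

Lemma Rabs_inner_le {k} (u v : Vec k) : Rabs (inner u v) <= vnorm u * vnorm v.
Proof.
  unfold vnorm. rewrite <- sqrt_mult_alt, <- sqrt_Rsqr_abs by apply inner_ge0.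
  apply sqrt_le_1_alt. unfold Rsqr. pose proof (inner_pow2_le k u v). simpl in *. lra.
Qed.

(** * Componentwise convergence of sequences of vectors *)

Definition vec_cv {k} (u : nat -> Vec k) (a : Vec k) : Prop :=
  forall i, Un_cv (fun j => u j i) (a i).

Lemma vec_cv_const {k} (a : Vec k) : vec_cv (fun _ => a) a.
Proof. intro i; apply Un_cv_const. Qed.

Lemma vec_cv_sub {k} (u v : nat -> Vec k) a b :
  vec_cv u a -> vec_cv v b -> vec_cv (fun j => vsub (u j) (v j)) (vsub a b).
Proof. intros Hu Hv i; apply CV_minus; auto. Qed.

Lemma Un_cv_inner {k} (u v : nat -> Vec k) a b :
  vec_cv u a -> vec_cv v b -> Un_cv (fun j => inner (u j) (v j)) (inner a b).
Proof.
  intros Hu Hv. apply (Un_cv_sumF k (fun j i => u j i * v j i) (fun i => a i * b i)).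
  intro i; apply CV_mult; auto.
Qed.

Lemma Un_cv_vnorm {k} (u : nat -> Vec k) a : vec_cv u a -> Un_cv (fun j => vnorm (u j)) (vnorm a).
Proof.
  intro Hu. apply continuity_seq; [apply continuity_pt_sqrt, inner_ge0|].
  apply Un_cv_inner; exact Hu.
Qed.

Lemma vec_cv_dist {k} (u : nat -> Vec k) a e :
  vec_cv u a -> 0 < e -> exists N, forall j, (N <= j)%nat -> vnorm (vsub (u j) a) < e.
Proof.
  intros Hu He.
  assert (Hcv := Un_cv_vnorm _ _ (vec_cv_sub _ _ _ _ Hu (vec_cv_const a))).
  unfold vnorm at 2 in Hcv. rewrite inner_vsub_diag_r, sqrt_0 in Hcv.
  destruct (Hcv e He) as [N HN]. exists N; intros j Hj.
  specialize (HN j Hj). unfold Rdist in HN.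
  rewrite Rminus_0_r, Rabs_pos_eq in HN by apply vnorm_ge0. exact HN.
Qed.

Lemma vec_cv_of_dist_lt_inv {k} (u : nat -> Vec k) a :
  (forall j, vnorm (vsub (u j) a) < / (INR j + 1)) -> vec_cv u a.
Proof.
  intros Hu i e He. destruct (RinvN_cv He) as [N HN]. exists N; intros j Hj.
  specialize (HN j Hj). unfold Rdist in *; simpl in HN.
  rewrite Rminus_0_r, Rabs_pos_eq in HN by (left; apply RinvN_pos).
  pose proof (Rabs_coord_le_vnorm (vsub (u j) a) i). specialize (Hu j).
  unfold vsub in *. lra.
Qed.

Lemma continuous_fun_vec_cv {k} (h : Vec k -> R) (u : nat -> Vec k) a :
  continuous_fun h -> vec_cv u a -> Un_cv (fun j => h (u j)) (h a).
Proof.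
  intros Hh Hu e He. destruct (Hh a e He) as [d [Hd Hclose]].
  destruct (vec_cv_dist u a d Hu Hd) as [N HN].
  exists N; intros j Hj. apply Hclose, HN, Hj.
Qed.

(** * Gradients and the descent lemma *)

Lemma gradient_continuous {k} (h : Vec k -> R) gh : is_gradient h gh -> continuous_fun h.
Proof.
  intros Hh x eps Heps.
  destruct (Hh x 1 Rlt_0_1) as [d [Hd Hclose]].
  set (C := vnorm (gh x) + 1).
  assert (HC : 0 < C) by (pose proof (vnorm_ge0 (gh x)); unfold C; lra).
  exists (Rmin d (eps / C)). split; [apply Rmin_pos; [lra | apply Rdiv_lt_0_compat; lra]|].
  intros y Hy.
  specialize (Hclose (vsub y x) (Rlt_le_trans _ _ _ Hy (Rmin_l _ _))).
  rewrite vadd_vsub in Hclose.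
  pose proof (Rabs_inner_le (gh x) (vsub y x)) as HCS.
  assert (Hsmall : C * vnorm (vsub y x) < eps).
  { pose proof (Rlt_le_trans _ _ _ Hy (Rmin_r _ _)) as Hy'.
    apply (Rmult_lt_compat_l C) in Hy'; [|exact HC].
    replace (C * (eps / C)) with eps in Hy' by (field; lra). exact Hy'. }
  assert (Htri : Rabs (h y - h x) <=
      Rabs (h y - h x - inner (gh x) (vsub y x)) + Rabs (inner (gh x) (vsub y x))).
  { replace (h y - h x) with ((h y - h x - inner (gh x) (vsub y x)) + inner (gh x) (vsub y x))
      at 1 by ring. apply Rabs_triang. }
  unfold C in Hsmall. lra.
Qed.

Lemma derivable_pt_lim_line {k} (h : Vec k -> R) gh x d s : is_gradient h gh ->
  derivable_pt_lim (fun s => h (vadd x (vscale s d))) s (inner (gh (vadd x (vscale s d))) d).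
Proof.
  intros Hh eps Heps.
  set (z := vadd x (vscale s d)).
  set (C := vnorm d + 1).
  assert (HC : 0 < C) by (pose proof (vnorm_ge0 d); unfold C; lra).
  destruct (Hh z (eps / C)) as [d0 [Hd0 Hclose]]; [apply Rdiv_lt_0_compat; lra|].
  assert (Hdelta : 0 < d0 / C) by (apply Rdiv_lt_0_compat; lra).
  exists (mkposreal _ Hdelta). intros r Hr0 Hr. simpl in Hr.
  replace (vadd x (vscale (s + r) d)) with (vadd z (vscale r d))
    by (apply functional_extensionality; intro i; unfold z, vadd, vscale; ring).
  assert (Hstep : vnorm (vscale r d) < d0).
  { rewrite vnorm_scale. apply Rle_lt_trans with (Rabs r * C).
    - apply Rmult_le_compat_l; [apply Rabs_pos | unfold C; lra].
    - apply (Rmult_lt_compat_r C) in Hr; [|exact HC].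
      replace (d0 / C * C) with d0 in Hr by (field; lra). exact Hr. }
  specialize (Hclose _ Hstep). rewrite inner_scale_r, vnorm_scale in Hclose.
  assert (Hr' : 0 < Rabs r) by (apply Rabs_pos_lt, Hr0).
  replace ((h (vadd z (vscale r d)) - h z) / r - inner (gh z) d)
    with ((h (vadd z (vscale r d)) - h z - r * inner (gh z) d) / r) by (field; exact Hr0).
  unfold Rdiv. rewrite Rabs_mult, Rabs_inv.
  apply Rle_lt_trans with (eps / C * (Rabs r * vnorm d) * / Rabs r).
  - apply Rmult_le_compat_r; [left; apply Rinv_0_lt_compat, Hr' | exact Hclose].
  - replace (eps / C * (Rabs r * vnorm d) * / Rabs r) with (eps * (vnorm d / C))
      by (field; lra).
    assert (vnorm d / C < 1).
    { apply (Rmult_lt_reg_r C); [exact HC|].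
      replace (vnorm d / C * C) with (vnorm d) by (field; lra). unfold C; lra. }
    nra.
Qed.

Lemma descent_lemma {k} (h : Vec k -> R) gh L :
  is_gradient h gh -> lipschitz gh L -> 0 <= L ->
  forall x y, h y <= h x + inner (gh x) (vsub y x) + L * vnorm (vsub y x) ^ 2.
Proof.
  intros Hh HL HL0 x y. set (d := vsub y x).
  destruct (MVT_cor2 (fun s => h (vadd x (vscale s d)))
              (fun s => inner (gh (vadd x (vscale s d))) d) 0 1 Rlt_0_1)
    as [s [Hmvt Hs]].
  { intros; apply derivable_pt_lim_line, Hh. }
  replace (vadd x (vscale 1 d)) with y in Hmvt
    by (apply functional_extensionality; intro i; unfold d, vadd, vscale, vsub; ring).
  replace (vadd x (vscale 0 d)) with x in Hmvt
    by (apply functional_extensionality; intro i; unfold d, vadd, vscale, vsub; ring).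
  set (z := vadd x (vscale s d)) in *.
  assert (Hzx : vsub z x = vscale s d)
    by (apply functional_extensionality; intro i; unfold z, vadd, vscale, vsub; ring).
  assert (HCS := Rabs_inner_le (vsub (gh z) (gh x)) d).
  rewrite inner_sub_l in HCS.
  assert (Hlip := HL z x). rewrite Hzx, vnorm_scale, Rabs_pos_eq in Hlip by lra.
  assert (Hd := vnorm_ge0 d).
  assert (Hgrad : vnorm (vsub (gh z) (gh x)) * vnorm d <= L * vnorm d ^ 2).
  { apply Rle_trans with (L * (s * vnorm d) * vnorm d); [apply Rmult_le_compat_r; auto|].
    assert (0 <= L * vnorm d * vnorm d) by (apply Rmult_le_pos; [apply Rmult_le_pos|]; auto).
    nra. }
  pose proof (Rle_abs (inner (gh z) d - inner (gh x) d)). lra.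
Qed.

Lemma lipschitz_Rmax0 {k l} (G : Vec k -> Vec l) L : lipschitz G L -> lipschitz G (Rmax L 0).
Proof.
  intros HG x y. eapply Rle_trans; [apply HG|].
  apply Rmult_le_compat_r; [apply vnorm_ge0 | apply Rmax_l].
Qed.

Lemma gradient_vec_cv {k} (h : Vec k -> R) gh (u : nat -> Vec k) a :
  is_gradient h gh -> vec_cv u a -> Un_cv (fun j => h (u j)) (h a).
Proof. intros Hh; apply continuous_fun_vec_cv, (gradient_continuous h gh Hh). Qed.

(** * The line search of SCP_ls *)

Lemma weight_lt_of_violated {n m} (g : Fin.t m -> Vec n -> R) gg Lip i (y z : Vec n) (w : Vec m) :
  is_gradient (g i) (gg i) -> lipschitz (gg i) Lip ->
  Gbar g gg z y w i <= 0 -> 0 < g i z -> w i < 2 * Rmax Lip 0.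
Proof.
  intros Hg HL HG Hz. unfold Gbar in HG.
  pose proof (descent_lemma (g i) (gg i) (Rmax Lip 0) Hg (lipschitz_Rmax0 _ _ HL)
                (Rmax_r _ _) y z).
  pose proof (pow2_ge_0 (vnorm (vsub z y))).
  nra.
Qed.

(* Each enlargement of the weights is triggered by a violated constraint [i],
   whose weight is then below [2 Lip_i], so below the sum of all [2 Lip_i]. *)
Definition weight_bound {m} (Lipg : Fin.t m -> R) (Lund Lbar tau : R) : R :=
  Lbar * Rmax 1 (tau * sumF m (fun i => 2 * Rmax (Lipg i) 0) / Lund).

Lemma linesearch_weights_bounded {n m} (g : Fin.t m -> Vec n -> R) gg Lipg Lund Lbar tau
    (xc : Vec n) (K : nat) (LG : nat -> Vec m) (XT : nat -> Vec n) :
  (forall i, is_gradient (g i) (gg i) /\ lipschitz (gg i) (Lipg i)) ->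
  0 < Lund -> 1 < tau -> (forall i, Lund <= LG O i <= Lbar) ->
  (forall j, (j <= K)%nat -> forall i, Gbar g gg (XT j) xc (LG j) i <= 0) ->
  (forall j, (j < K)%nat ->
     (~ feasible g (XT j) /\ forall i, LG (S j) i = tau * LG j i) \/
     (forall i, LG (S j) i = LG j i)) ->
  forall i, Lund <= LG K i <= weight_bound Lipg Lund Lbar tau.
Proof.
  intros Hg HLund Htau HLG0 HG Hstep.
  set (S2 := sumF m (fun i => 2 * Rmax (Lipg i) 0)).
  set (Q := Rmax 1 (tau * S2 / Lund)).
  assert (Hratio : forall j, (j <= K)%nat ->
            exists r, 1 <= r <= Q /\ forall i, LG j i = r * LG O i).
  { induction j as [|j IH]; intro Hj.
    - exists 1. split; [split; [lra | apply Rmax_l] | intro i; ring].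
    - destruct (IH ltac:(lia)) as [r [Hr HLGj]].
      destruct (Hstep j ltac:(lia)) as [[Hinf Hmul] | Hsame].
      + exists (tau * r). split; [|intro i; rewrite Hmul, HLGj; ring].
        apply not_all_ex_not in Hinf. destruct Hinf as [i0 Hi0]. apply Rnot_le_lt in Hi0.
        destruct (Hg i0) as [Hgi Hlip].
        assert (Hw := weight_lt_of_violated g gg _ i0 xc _ _ Hgi Hlip (HG j ltac:(lia) i0) Hi0).
        assert (HS2 : 2 * Rmax (Lipg i0) 0 <= S2).
        { apply (sumF_ge_term m (fun i => 2 * Rmax (Lipg i) 0)).
          intro i; pose proof (Rmax_r (Lipg i) 0); lra. }
        assert (Hrl : r * Lund < S2) by (rewrite HLGj in Hw; destruct (HLG0 i0); nra).
        split; [nra|].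
        apply Rle_trans with (tau * S2 / Lund); [|apply Rmax_r].
        replace (tau * S2 / Lund) with (tau * (S2 / Lund)) by (field; lra).
        apply Rmult_le_compat_l; [lra|].
        apply Rmult_le_reg_r with Lund; [exact HLund|].
        replace (S2 / Lund * Lund) with S2 by (field; lra). lra.
      + exists r. split; [exact Hr | intro i; rewrite Hsame, HLGj; reflexivity]. }
  intro i. destruct (Hratio K (le_n K)) as [r [Hr HLGK]]. rewrite HLGK.
  destruct (HLG0 i). unfold weight_bound. fold S2. fold Q. split; nra.
Qed.

Lemma scp_ls_step_spec {n m} (f : Vec n -> R) gf P1 P2 (g : Fin.t m -> Vec n -> R) gg Lipg
    c Lund Lbar tau xc xn Lft Lgt :
  (forall i, is_gradient (g i) (gg i) /\ lipschitz (gg i) (Lipg i)) ->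
  0 < c -> 0 < Lund -> 1 < tau ->
  scp_ls_step f gf P1 P2 g gg c Lund Lbar tau xc xn Lft Lgt ->
  feasible g xn /\ f xn + P1 xn - P2 xn <= f xc + P1 xc - P2 xc /\
  (forall i, Gbar g gg xn xc Lgt i <= 0) /\
  (forall i, Lund <= Lgt i <= weight_bound Lipg Lund Lbar tau).
Proof.
  intros Hg Hc HLund Htau Hs.
  destruct Hs as (xi & _ & K & LF & LG & XT & _ & HLG0 & Hsub & Hloop & Hfeas & Hdec & -> & _ & HLgt).
  cbv zeta in Hdec.
  assert (ELgt : Lgt = LG K) by (apply functional_extensionality; exact HLgt). subst Lgt.
  split; [exact Hfeas|]. split.
  { pose proof (pow2_ge_0 (vnorm (vsub (XT K) xc))). nra. }
  split; [apply (Hsub K (le_n K))|].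
  apply (linesearch_weights_bounded g gg Lipg Lund Lbar tau xc K LG XT Hg HLund Htau HLG0).
  - intros j Hj; apply (Hsub j Hj).
  - intros j Hj. destruct (Hloop j Hj) as [[Hinf [Hmul _]] | (_ & _ & _ & Hsame)];
      [left; split | right]; assumption.
Qed.

(** * Subsequences and accumulation points *)

Definition strict_incr (phi : nat -> nat) : Prop := forall j, (phi j < phi (S j))%nat.

Lemma strict_incr_ge phi : strict_incr phi -> forall j, (j <= phi j)%nat.
Proof. intros Hphi j; induction j as [|j IH]; [lia|]. specialize (Hphi j). lia. Qed.

Lemma strict_incr_le phi : strict_incr phi -> forall j j', (j <= j')%nat -> (phi j <= phi j')%nat.
Proof. intros Hphi j j' Hjj. induction Hjj as [|j' _ IH]; [lia|]. specialize (Hphi j'). lia. Qed.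

Lemma strict_incr_comp phi psi :
  strict_incr phi -> strict_incr psi -> strict_incr (fun j => phi (psi j)).
Proof.
  intros Hphi Hpsi j. specialize (Hpsi j).
  assert ((phi (S (psi j)) <= phi (psi (S j)))%nat) by (apply strict_incr_le; auto).
  specialize (Hphi (psi j)). lia.
Qed.

Lemma Un_cv_subseq (u : nat -> R) l phi :
  Un_cv u l -> strict_incr phi -> Un_cv (fun j => u (phi j)) l.
Proof.
  intros Hu Hphi e He. destruct (Hu e He) as [N HN]. exists N; intros j Hj.
  apply HN. pose proof (strict_incr_ge phi Hphi j). lia.
Qed.

Lemma vec_cv_subseq {k} (u : nat -> Vec k) l phi :
  vec_cv u l -> strict_incr phi -> vec_cv (fun j => u (phi j)) l.
Proof. intros Hu Hphi i. apply (Un_cv_subseq (fun j => u j i)); auto. Qed.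

Lemma Un_cv_decreasing_subseq (u : nat -> R) phi l :
  Un_decreasing u -> strict_incr phi -> Un_cv (fun j => u (phi j)) l -> Un_cv u l.
Proof.
  intros Hu Hphi Hcv.
  assert (Hlow : forall t, l <= u t).
  { intro t. apply Rnot_lt_le; intro Hlt.
    destruct (Hcv (l - u t)) as [N HN]; [lra|].
    specialize (HN (max N t) ltac:(lia)). unfold Rdist in HN. apply Rabs_def2 in HN.
    assert (u (phi (max N t)) <= u t).
    { apply decreasing_prop; [exact Hu|]. pose proof (strict_incr_ge phi Hphi (max N t)). lia. }
    lra. }
  intros e He. destruct (Hcv e He) as [N HN]. exists (phi N). intros t Ht.
  specialize (HN N (le_n N)). unfold Rdist in *. apply Rabs_def2 in HN.
  pose proof (decreasing_prop u _ _ Hu Ht). specialize (Hlow t).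
  apply Rabs_def1; lra.
Qed.

Lemma exists_subseq (Q : R -> nat -> Prop) :
  (forall e N, 0 < e -> exists t, (N <= t)%nat /\ Q e t) ->
  exists s, strict_incr s /\ forall j, Q (/ (INR j + 1)) (s j).
Proof.
  intro HQ.
  assert (Hpick : forall j N, { t | (N <= t)%nat /\ Q (/ (INR j + 1)) t }).
  { intros j N. apply constructive_indefinite_description, HQ, RinvN_pos. }
  set (s := fix s j := match j with
                       | O => proj1_sig (Hpick O O)
                       | S j' => proj1_sig (Hpick (S j') (S (s j')))
                       end).
  exists s. split.
  - intro j. exact (proj1 (proj2_sig (Hpick (S j) (S (s j))))).
  - intros [|j]; [exact (proj2 (proj2_sig (Hpick O O))) |].
    exact (proj2 (proj2_sig (Hpick (S j) (S (s j))))).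
Qed.

Lemma bounded_Un_cv_subseq (u : nat -> R) M : (forall j, Rabs (u j) <= M) ->
  exists phi l, strict_incr phi /\ Un_cv (fun j => u (phi j)) l.
Proof.
  intro HM.
  destruct (Bolzano_Weierstrass u (fun r => -M <= r <= M) (compact_P3 (-M) M)) as [l Hl].
  { intro j. specialize (HM j). unfold Rabs in HM. destruct (Rcase_abs (u j)); lra. }
  destruct (exists_subseq (fun e t => Rabs (u t - l) < e)) as [s [Hs Hsl]].
  { intros e N He. destruct (Hl (disc l (mkposreal e He)) N) as [t [HNt Ht]].
    - exists (mkposreal e He); intros y Hy; exact Hy.
    - exists t; split; [exact HNt | exact Ht]. }
  exists s, l. split; [exact Hs|].
  intros e He. destruct (RinvN_cv He) as [N HN]. exists N; intros j Hj.
  specialize (HN j Hj). specialize (Hsl j). unfold Rdist in *; simpl in HN.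
  rewrite Rminus_0_r, Rabs_pos_eq in HN by (left; apply RinvN_pos). lra.
Qed.

Lemma bounded_vec_cv_subseq k (u : nat -> Vec k) M : (forall j i, Rabs (u j i) <= M) ->
  exists phi l, strict_incr phi /\ vec_cv (fun j => u (phi j)) l.
Proof.
  revert u; induction k as [|k IH]; intros u HM.
  - exists (fun j => j), (fun _ => 0). split; [intro j; lia | intro i; inversion i].
  - destruct (bounded_Un_cv_subseq (fun j => u j Fin.F1) M) as [phi1 [l1 [Hphi1 Hl1]]];
      [intro j; apply HM|].
    destruct (IH (fun j i => u (phi1 j) (Fin.FS i))) as [phi2 [l2 [Hphi2 Hl2]]];
      [intros j i; apply HM|].
    exists (fun j => phi1 (phi2 j)), (fun i => Fin.caseS' i (fun _ => R) l1 l2).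
    split; [apply strict_incr_comp; auto|].
    intro i. pattern i. apply Fin.caseS'; simpl.
    + apply (Un_cv_subseq (fun j => u (phi1 j) Fin.F1)); auto.
    + intro p. apply Hl2.
Qed.

Lemma accum_point_subseq {n m} (x : nat -> Vec n) (Lg : nat -> Vec m) a b w :
  is_accum_point x Lg a b w ->
  exists s, strict_incr s /\ vec_cv (fun j => x (S (s j))) a /\
    vec_cv (fun j => x (s j)) b /\ vec_cv (fun j => Lg (s j)) w.
Proof.
  intro Hacc.
  destruct (exists_subseq (fun e t => vnorm (vsub (x (S t)) a) < e /\
              vnorm (vsub (x t) b) < e /\ vnorm (vsub (Lg t) w) < e)) as [s [Hs Hclose]].
  { intros e N He. destruct (Hacc e N He) as [t [HNt Ht]]. exists t; split; assumption. }
  exists s. split; [exact Hs|].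
  split; [|split]; apply vec_cv_of_dist_lt_inv; intro j; apply Hclose.
Qed.

Lemma subseq_accum_point {n m} (x : nat -> Vec n) (Lg : nat -> Vec m) a b w s :
  strict_incr s -> vec_cv (fun j => x (S (s j))) a -> vec_cv (fun j => x (s j)) b ->
  vec_cv (fun j => Lg (s j)) w -> is_accum_point x Lg a b w.
Proof.
  intros Hs Ha Hb Hw e N He.
  destruct (vec_cv_dist _ _ e Ha He) as [Na HNa].
  destruct (vec_cv_dist _ _ e Hb He) as [Nb HNb].
  destruct (vec_cv_dist _ _ e Hw He) as [Nw HNw].
  set (j := max N (max Na (max Nb Nw))).
  exists (s j). pose proof (strict_incr_ge s Hs j).
  split; [lia|]. split; [apply HNa; lia|]. split; [apply HNb; lia | apply HNw; lia].
Qed.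

Lemma bounded_exists_accum_point {n m} (x : nat -> Vec n) (Lg : nat -> Vec m) M B :
  (forall t i, Rabs (x t i) <= M) -> (forall t i, Rabs (Lg t i) <= B) ->
  exists a b w, is_accum_point x Lg a b w.
Proof.
  intros HM HB.
  destruct (bounded_vec_cv_subseq n (fun t => x (S t)) M) as [phi1 [a [Hphi1 Ha]]];
    [intros; apply HM|].
  destruct (bounded_vec_cv_subseq n (fun j => x (phi1 j)) M) as [phi2 [b [Hphi2 Hb]]];
    [intros; apply HM|].
  destruct (bounded_vec_cv_subseq m (fun j => Lg (phi1 (phi2 j))) B) as [phi3 [w [Hphi3 Hw]]];
    [intros; apply HB|].
  exists a, b, w.
  apply (subseq_accum_point x Lg a b w (fun j => phi1 (phi2 (phi3 j)))).
  - apply strict_incr_comp; [|apply strict_incr_comp]; assumption.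
  - apply (vec_cv_subseq (fun j => x (S (phi1 j))) a (fun j => phi2 (phi3 j)));
      [exact Ha | apply strict_incr_comp; assumption].
  - apply (vec_cv_subseq (fun j => x (phi1 (phi2 j))) b phi3); assumption.
  - exact Hw.
Qed.

(** * Limits of the iterates *)

Lemma level_bounded_iterates {n m} (f P1 P2 : Vec n -> R) (g : Fin.t m -> Vec n -> R)
    (x : nat -> Vec n) :
  level_bounded f P1 P2 g -> (forall t, feasible g (x t)) ->
  Un_decreasing (fun t => f (x t) + P1 (x t) - P2 (x t)) ->
  exists M, forall t i, Rabs (x t i) <= M.
Proof.
  intros Hlev Hfeas Hdec.
  destruct (Hlev (f (x O) + P1 (x O) - P2 (x O))) as [M HM].
  exists M. intros t i. eapply Rle_trans; [apply Rabs_coord_le_vnorm|].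
  apply HM; [apply Hfeas|]. apply (decreasing_prop _ O t Hdec). lia.
Qed.

Lemma objective_vec_cv {n} (f : Vec n -> R) gf P1 P2 (u : nat -> Vec n) a :
  is_gradient f gf -> continuous_fun P1 -> continuous_fun P2 -> vec_cv u a ->
  Un_cv (fun j => f (u j) + P1 (u j) - P2 (u j)) (f a + P1 a - P2 a).
Proof.
  intros Hf HP1 HP2 Hu.
  apply CV_minus; [apply CV_plus|]; [apply (gradient_vec_cv f gf) | |];
    try apply continuous_fun_vec_cv; assumption.
Qed.

Lemma Un_cv_Gbar {n m} (g : Fin.t m -> Vec n -> R) gg i (z y : nat -> Vec n) (w : nat -> Vec m) a b v :
  is_gradient (g i) (gg i) -> (forall p, continuous_fun (fun q => gg i q p)) ->
  vec_cv z a -> vec_cv y b -> vec_cv w v ->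
  Un_cv (fun j => Gbar g gg (z j) (y j) (w j) i) (Gbar g gg a b v i).
Proof.
  intros Hg Hgg Hz Hy Hw. unfold Gbar.
  assert (Hd := vec_cv_sub _ _ _ _ Hz Hy).
  apply CV_plus; [apply CV_plus|].
  - apply (gradient_vec_cv (g i) (gg i)); assumption.
  - apply Un_cv_inner; [intro p; apply (continuous_fun_vec_cv (fun q => gg i q p)) | ]; auto.
  - apply CV_mult; [unfold Rdiv; apply CV_mult; [apply Hw | apply Un_cv_const]|].
    apply (continuity_seq (fun r => r ^ 2)); [reg | apply Un_cv_vnorm, Hd].
Qed.

Lemma Fbar_of_Gbar_nonpos {n m} (f P1 P2 : Vec n -> R) g gg x y (w : Vec m) :
  (forall i, Gbar g gg x y w i <= 0) -> Fbar f P1 P2 g gg x y w = Fin (f x + P1 x - P2 x).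
Proof.
  intro HG. unfold Fbar.
  destruct (excluded_middle_informative _) as [_ | HnG]; [reflexivity | contradiction].
Qed.

Lemma Fbar_accum_point {n m} (f P1 P2 : Vec n -> R) (g : Fin.t m -> Vec n -> R) gg
    (x : nat -> Vec n) (Lg : nat -> Vec m) a b w :
  (forall i, is_gradient (g i) (gg i)) -> (forall i p, continuous_fun (fun q => gg i q p)) ->
  (forall t i, Gbar g gg (x (S t)) (x t) (Lg t) i <= 0) ->
  is_accum_point x Lg a b w -> Fbar f P1 P2 g gg a b w = Fin (f a + P1 a - P2 a).
Proof.
  intros Hg Hgg HG Hacc. apply Fbar_of_Gbar_nonpos. intro i.
  destruct (accum_point_subseq x Lg a b w Hacc) as (s & _ & Ha & Hb & Hw).
  eapply Rle_cv_lim; [exact (fun j => HG (s j) i) | | apply Un_cv_const].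
  apply Un_cv_Gbar; auto.
Qed.

Theorem mainTheorem4 (n m : nat)
  (f : Vec n -> R) (gf : Vec n -> Vec n) (P1 P2 : Vec n -> R)
  (g : Fin.t m -> Vec n -> R) (gg : Fin.t m -> Vec n -> Vec n)
  (Lipf : R) (Lipg : Fin.t m -> R)
  (* f continuously differentiable with gradient gf *)
  (Hf : is_gradient f gf) (Hgfc : forall i : Fin.t n, continuous_fun (fun x => gf x i))
  (HP1 : convex_fun P1) (HP1c : continuous_fun P1)
  (HP2 : convex_fun P2) (HP2c : continuous_fun P2)
  (Hfeas : exists x, feasible g x)
  (* Assumption A *)
  (HAi : lipschitz gf Lipf)
  (HAii : forall i, is_gradient (g i) (gg i) /\ lipschitz (gg i) (Lipg i))
  (HAiii : level_bounded f P1 P2 g)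
  (* Assumption B *)
  (HBc : forall i (j : Fin.t n), continuous_fun (fun x => gg i x j))
  (HB : MFCQ g gg)
  (* algorithm parameters *)
  (c Lund Lbar tau : R) (x0 : Vec n)
  (Hc : 0 < c) (HL : 0 < Lund < Lbar) (Htau : 1 < tau) (Hx0 : feasible g x0)
  (x : nat -> Vec n) (Lf : nat -> R) (Lg : nat -> Vec m)
  (Hgen : scp_ls_generated f gf P1 P2 g gg c Lund Lbar tau x0 x Lf Lg) :
  (exists a b w, is_accum_point x Lg a b w) /\
  exists Fstar : R,
    (forall eps, 0 < eps -> exists N, forall t, (N <= t)%nat ->
       exists v, Fbar f P1 P2 g gg (x (S t)) (x t) (Lg t) = Fin v /\ Rabs (v - Fstar) < eps) /\
    (forall a b w, is_accum_point x Lg a b w -> Fbar f P1 P2 g gg a b w = Fin Fstar).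
Proof.
  destruct Hgen as [Hx0e Hstep].
  set (F0 := fun z => f z + P1 z - P2 z).
  pose proof (fun t => scp_ls_step_spec f gf P1 P2 g gg Lipg c Lund Lbar tau _ _ _ _
                         HAii Hc (proj1 HL) Htau (Hstep t)) as Hspec.
  assert (Hiter_feas : forall t, feasible g (x t))
    by (intros [|t]; [rewrite Hx0e; exact Hx0 | apply Hspec]).
  assert (Hdec : Un_decreasing (fun t => F0 (x t))) by (intro t; apply Hspec).
  assert (HGbar : forall t i, Gbar g gg (x (S t)) (x t) (Lg t) i <= 0) by (intro t; apply Hspec).
  assert (HF0 : forall u a, vec_cv u a -> Un_cv (fun j => F0 (u j)) (F0 a))
    by (intros; apply (objective_vec_cv f gf); assumption).
  destruct (level_bounded_iterates f P1 P2 g x HAiii Hiter_feas Hdec) as [M HM].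
  destruct (bounded_exists_accum_point x Lg M (weight_bound Lipg Lund Lbar tau) HM)
    as (a & b & w & Hacc).
  { intros t i. destruct (Hspec t) as (_ & _ & _ & HLg). specialize (HLg i).
    rewrite Rabs_pos_eq; lra. }
  destruct (accum_point_subseq x Lg a b w Hacc) as (s & Hs & Ha & _).
  assert (Hcv : Un_cv (fun t => F0 (x t)) (F0 a)).
  { apply (Un_cv_decreasing_subseq _ (fun j => S (s j))); [exact Hdec | | apply HF0, Ha].
    intro j; specialize (Hs j); lia. }
  split; [exists a, b, w; exact Hacc|].
  exists (F0 a). split.
  - intros eps Heps. destruct (Hcv eps Heps) as [N HN]. exists N; intros t Ht.
    exists (F0 (x (S t))). split; [apply Fbar_of_Gbar_nonpos, HGbar | apply (HN (S t)); lia].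
  - intros a' b' w' Hacc'.
    rewrite (Fbar_accum_point f P1 P2 g gg x Lg a' b' w') by (try apply HAii; assumption).
    destruct (accum_point_subseq x Lg a' b' w' Hacc') as (s' & Hs' & Ha' & _).
    f_equal. apply (UL_sequence (fun j => F0 (x (S (s' j))))); [apply HF0, Ha'|].
    apply (Un_cv_subseq (fun t => F0 (x t)) _ (fun j => S (s' j)) Hcv).
    intro j; specialize (Hs' j); lia.
Qed.
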